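(* Let $B=(A,\mathcal R)$ be a blueprint, $\sim$ a congruence on $B$, and $i:B\to B_{\mathbb Z}$ the canonical map. Then $$I_{\mathbb Z}(\sim)=\Big\{\textstyle\sum_k i(c_k)-\sum_k i(d_k)\ :\ c_k,d_k\in B,\ c_k\sim d_k\text{ for all }k\Big\}$$ is an ideal of the ring $B_{\mathbb Z}$, and $(B/\sim)_{\mathbb Z}\cong B_{\mathbb Z}/I_{\mathbb Z}(\sim)$ canonically (compatibly with the maps from $\mathbb Z[A]$). If $\sim=\sim_I$ for an ideal $I$ of $B$, then $$I_{\mathbb Z}(\sim_I)=\Big\{\textstyle\sum_k i(c_k)-\sum_k i(d_k)\ :\ c_k,d_k\in I\Big\}.$$
   Context: A monoid is a commutative semigroup $A$, written multiplicatively, with neutral element $1$. For a monoid $A$, $\mathbb N[A]$ denotes the semiring of finite formal sums $\sum a_i$ of elements $a_i\in A$ (repetitions allowed), with empty sum $\underline0$ and multiplication extended bilinearly from $A$. A pre-addition on $A$ is a relation $\mathcal R\subseteq\mathbb N[A]\times\mathbb N[A]$, written $\sum a_i\equiv\sum b_j$, which is an equivalence relation and satisfies: if $\sum a_i\equiv\sum b_j$ and $\sum c_k\equiv\sum d_l$, then $\sum a_i+\sum c_k\equiv\sum b_j+\sum d_l$ and $\sum_{i,k}a_ic_k\equiv\sum_{j,l}b_jd_l$. A blueprint $B=(A,\mathcal R)$ is a monoid $A$ with a pre-addition $\mathcal R$; we write $a\in B$ for $a\in A$. An element $e$ with $e\equiv\underline0$ is a zero of $B$. $B_{\mathbb Z}$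 is the ring $\mathbb Z[A]/\mathcal I(\mathcal R)$, where $\mathbb Z[A]$ is the monoid ring and $\mathcal I(\mathcal R)=\{\sum a_i-\sum b_j:\sum a_i\equiv\sum b_j\}$ (an ideal); $i:B\to B_{\mathbb Z}$ is induced by $A\to\mathbb Z[A]$. For an equivalence relation $\sim$ on $A$, its linear extension $\sim_{\mathbb N}$ is the equivalence relation on $\mathbb N[A]$ generated by $\sum_{i=1}^n a_i\sim_{\mathbb N}\sum_{i=1}^n b_i$ whenever $a_i\sim b_i$ for all $i$; $\sim_{\mathcal R}$ is the smallest equivalence relation on $\mathbb N[A]$ containing $\mathcal R$ and $\sim_{\mathbb N}$. A congruence on $B$ is an equivalence relation $\sim$ on $A$ such that (C1) $\sim_{\mathbb N}$ is a pre-addition on $A$, and (C2) the restriction of $\sim_{\mathcal R}$ to $A$ equals $\sim$. The quotient $B/\sim$ has monoid $A/\sim$ and the smallest pre-addition containing all $\sum[a_i]\equiv\sum[b_j]$ with $\sum a_i\equiv\sum b_j$ in $B$. For a subset $I\subseteq B$, $a\sim^I b$ iff $a=b$ or $a,b\in I$; and $a\sim_I b$ iff there is a finite sequence $a\equiv\sum_k c_{1,k}\sim^I_{\mathbb N}\sum_k d_{1,k}\equiv\cdots\sim^I_{\mathbb N}\sum_k d_{n,k}\equiv b$ with $c_{i,k},d_{i,k}\in A$. An ideal of $B$ is a subset $I$ with (I1) $IB\subseteq I$; (I2) every zero of $B$ lies in $I$; (I3) if $a\sim_I b$ and $b\in I$ then $a\in I$. For an ideal $I$ containing all absorbing elements (elements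 $e$ with $eb\equiv e$ for all $b$), $\sim_I$ is a congruence. *)

From Stdlib Require Import List Permutation Relations.
Import ListNotations.

Record Monoid := {
  mcar : Type;
  mmul : mcar -> mcar -> mcar;
  mone : mcar;
  mmul_assoc : forall a b c, mmul a (mmul b c) = mmul (mmul a b) c;
  mmul_comm : forall a b, mmul a b = mmul b a;
  mmul_1l : forall a, mmul mone a = a
}.

(** Elements of N[A] are represented by lists (equality in N[A] = Permutation).
    Sum = concatenation, empty sum = nil, product extended bilinearly. *)
Definition nprod (M : Monoid) (s t : list (mcar M)) : list (mcar M) :=
  flat_map (fun a => map (mmul M a) t) s.

(** A pre-addition: an equivalence relation on N[A] (hence compatible with
    Permutation of representatives), closed under sums and products. *)
Definition pre_addition (M : Monoid) (R : list (mcar M) -> list (mcar M) -> Prop) : Prop :=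
  (forall s, R s s) /\
  (forall s t, R s t -> R t s) /\
  (forall s t u, R s t -> R t u -> R s u) /\
  (forall s s' t t', Permutation s s' -> Permutation t t' -> R s t -> R s' t') /\
  (forall s t u v, R s t -> R u v -> R (s ++ u) (t ++ v)) /\
  (forall s t u v, R s t -> R u v -> R (nprod M s u) (nprod M t v)).

Record Blueprint := {
  bmon : Monoid;
  bR : list (mcar bmon) -> list (mcar bmon) -> Prop;
  bR_pre : pre_addition bmon bR
}.

Definition bcar (B : Blueprint) : Type := mcar (bmon B).

(** Linear extension of an equivalence relation on A to N[A]: the equivalence
    relation generated by  sum a_i ~ sum b_i  whenever a_i ~ b_i for all i
    (on list representatives we also include Permutation = equality in N[A]). *)
Definition linext {A : Type} (sim : A -> A -> Prop) : list A -> list A -> Prop :=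
  clos_refl_sym_trans (list A) (fun s t => Forall2 sim s t \/ Permutation s t).

Definition simR (B : Blueprint) (sim : bcar B -> bcar B -> Prop) :
  list (bcar B) -> list (bcar B) -> Prop :=
  clos_refl_sym_trans (list (bcar B)) (fun s t => bR B s t \/ linext sim s t).

Definition is_equiv {A : Type} (r : A -> A -> Prop) : Prop :=
  (forall a, r a a) /\ (forall a b, r a b -> r b a) /\
  (forall a b c, r a b -> r b c -> r a c).

Definition is_congruence (B : Blueprint) (sim : bcar B -> bcar B -> Prop) : Prop :=
  is_equiv sim /\
  pre_addition (bmon B) (linext sim) /\
  (forall a b, simR B sim [a] [b] <-> sim a b).

(** Pre-addition of B/~, pulled back to list representatives in N[A]:
    the smallest pre-addition containing R and ~_N (the latter being
    equality in N[A/~]). *)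
Definition quotR (B : Blueprint) (sim : bcar B -> bcar B -> Prop)
  (s t : list (bcar B)) : Prop :=
  forall Q : list (bcar B) -> list (bcar B) -> Prop,
    pre_addition (bmon B) Q ->
    (forall u v, bR B u v -> Q u v) ->
    (forall u v, linext sim u v -> Q u v) ->
    Q s t.

(** Z[A] : formal differences (positive part, negative part) of elements of N[A]. *)
Definition ZA (A : Type) : Type := (list A * list A)%type.
Definition z0 {A : Type} : ZA A := ([], []).
Definition zadd {A : Type} (x y : ZA A) : ZA A := (fst x ++ fst y, snd x ++ snd y).
Definition zneg {A : Type} (x : ZA A) : ZA A := (snd x, fst x).
Definition zsub {A : Type} (x y : ZA A) : ZA A := zadd x (zneg y).
Definition zmul (M : Monoid) (x y : ZA (mcar M)) : ZA (mcar M) :=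
  (nprod M (fst x) (fst y) ++ nprod M (snd x) (snd y),
   nprod M (fst x) (snd y) ++ nprod M (snd x) (fst y)).

Definition zeqE {A : Type} (E : list A -> list A -> Prop) (x y : ZA A) : Prop :=
  E (fst x ++ snd y) (fst y ++ snd x).

(** Equality in the quotient ring Z[A]/I(R), I(R) = { sum a_i - sum b_j : R }. *)
Definition qeq {A : Type} (E : list A -> list A -> Prop)
  (R : list A -> list A -> Prop) (x y : ZA A) : Prop :=
  exists u v, R u v /\ zeqE E (zsub x y) (u, v).

(** Equality in B_Z (elements represented by elements of Z[A]). *)
Definition bz_eq (B : Blueprint) : ZA (bcar B) -> ZA (bcar B) -> Prop :=
  qeq (@Permutation (bcar B)) (bR B).

(** Equality in (B/~)_Z, with Z[A/~] elements represented by elements of Z[A]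
    (the map Z[A] -> Z[A/~] being the identity on representatives). *)
Definition quot_bz_eq (B : Blueprint) (sim : bcar B -> bcar B -> Prop) :
  ZA (bcar B) -> ZA (bcar B) -> Prop :=
  qeq (linext sim) (quotR B sim).

Definition incl {A : Type} (a : A) : ZA A := ([a], []).

(** I_Z(~) = { sum_k i(c_k) - sum_k i(d_k) : c_k ~ d_k }, as a subset of B_Z
    (given by a predicate on representatives, saturated for bz_eq). *)
Definition IZ (B : Blueprint) (sim : bcar B -> bcar B -> Prop) (x : ZA (bcar B)) : Prop :=
  exists cs ds : list (bcar B), Forall2 sim cs ds /\ bz_eq B x (cs, ds).

Definition ring_ideal (M : Monoid) (eqv : ZA (mcar M) -> ZA (mcar M) -> Prop)
  (P : ZA (mcar M) -> Prop) : Prop :=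
  (forall x y, eqv x y -> P x -> P y) /\
  P z0 /\
  (forall x y, P x -> P y -> P (zadd x y)) /\
  (forall x, P x -> P (zneg x)) /\
  (forall r x, P x -> P (zmul M r x)).

Definition simI0 (B : Blueprint) (I : bcar B -> Prop) (a b : bcar B) : Prop :=
  a = b \/ (I a /\ I b).

(** a ~_I b : a == sum c_1 ~^I_N sum d_1 == ... ~^I_N sum d_n == b. *)
Inductive Ichain (B : Blueprint) (I : bcar B -> Prop) :
  list (bcar B) -> list (bcar B) -> Prop :=
| ich_one s c d t :
    bR B s c -> linext (simI0 B I) c d -> bR B d t -> Ichain B I s t
| ich_cons s c d t :
    bR B s c -> linext (simI0 B I) c d -> Ichain B I d t -> Ichain B I s t.

Definition simI (B : Blueprint) (I : bcar B -> Prop) (a b : bcar B) : Prop :=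
  Ichain B I [a] [b].

Definition is_bp_ideal (B : Blueprint) (I : bcar B -> Prop) : Prop :=
  (forall a b, I a -> I (mmul (bmon B) a b)) /\
  (forall e, bR B [e] [] -> I e) /\
  (forall a b, simI B I a b -> I b -> I a).

From Stdlib Require Import List Permutation Relations.
Import ListNotations.

(* Write [J(r)] for the set of differences [sum_k c_k - sum_k d_k] with [r c_k d_k],
   viewed in [B_Z]. It is saturated and closed under sums; it is closed under negation
   when [r] is symmetric and under multiplication when [r] is compatible with
   multiplication in [A], so for a congruence it is an ideal. The relation
   [s ≡ t :<-> s - t ∈ J(~)] on [N[A]] is then a pre-addition containing [R] and [~_N];
   being the smallest such, the pre-addition of [B/~] is contained in it, which gives
   [(B/~)_Z ≅ B_Z / J(~)]. For [~ = ~_I], each step of a chain defining [~_I] is either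
   an instance of [R] or a pair of sums differing only in summands from [I], so
   [J(~_I) ⊆ J(I × I)]; the converse inclusion holds because [I × I ⊆ ~_I]. *)

Lemma Permutation_concat {A : Type} (L L' : list (list A)) :
  Permutation L L' -> Permutation (concat L) (concat L').
Proof.
  induction 1; simpl; auto.
  - now apply Permutation_app_head.
  - rewrite !app_assoc. apply Permutation_app_tail, Permutation_app_comm.
  - now apply (Permutation_trans IHPermutation1).
Qed.

Lemma Permutation_concat_eq {A : Type} (L L' : list (list A)) l l' :
  concat L = l -> concat L' = l' -> Permutation L L' -> Permutation l l'.
Proof. intros <- <-. apply Permutation_concat. Qed.

(* [perm_norm] proves [Permutation l l'] when [l] and [l'] are [++]-sums of the same
   summands up to order: both sides are split into their summands, and these lists of
   summands are matched syntactically. *)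
Ltac reify_app l acc :=
  lazymatch l with
  | ?a ++ ?b => let acc' := reify_app b acc in reify_app a acc'
  | @nil _ => acc
  | _ => constr:(l :: acc)
  end.

Ltac remove_atom a l :=
  lazymatch l with
  | a :: ?t => constr:(t)
  | ?b :: ?t => let t' := remove_atom a t in constr:(b :: t')
  end.

Ltac move_to_front :=
  lazymatch goal with
  | |- Permutation (?a :: ?t) (?a :: ?t) => reflexivity
  | |- Permutation (?a :: ?b :: _) (?b :: _) =>
      eapply perm_trans; [apply perm_swap | apply perm_skip; move_to_front]
  end.

Ltac match_atoms :=
  lazymatch goal with
  | |- Permutation nil nil => constructor
  | |- Permutation (?a :: _) ?r =>
      let r' := remove_atom a r in
      apply (perm_trans (l' := a :: r')); [apply perm_skip; match_atoms | move_to_front]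
  end.

Ltac perm_norm :=
  lazymatch goal with
  | |- @Permutation ?A ?l ?r =>
      let L := reify_app l (@nil (list A)) in
      let L' := reify_app r (@nil (list A)) in
      apply (Permutation_concat_eq L L');
      [ cbn [concat]; rewrite ?app_nil_r, ?app_assoc; reflexivity
      | cbn [concat]; rewrite ?app_nil_r, ?app_assoc; reflexivity
      | match_atoms ]
  end.

Lemma Permutation_between {A : Type} (l l' m m' : list A) :
  Permutation m m' -> Permutation l m -> Permutation m' l' -> Permutation l l'.
Proof. intros H Hl Hl'. exact (Permutation_trans Hl (Permutation_trans H Hl')). Qed.

Section Nprod.
Variable M : Monoid.

Lemma nprod_nil_r s : nprod M s [] = [].
Proof. induction s; simpl; auto. Qed.

Lemma nprod_app_r s u v : Permutation (nprod M s (u ++ v)) (nprod M s u ++ nprod M s v).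
Proof.
  induction s as [|a s IH]; simpl; auto.
  rewrite map_app. eapply Permutation_trans; [apply Permutation_app_head, IH | perm_norm].
Qed.

Lemma nprod_perm_r s u u' : Permutation u u' -> Permutation (nprod M s u) (nprod M s u').
Proof.
  intro H; induction s; simpl; auto.
  apply Permutation_app; auto. now apply Permutation_map.
Qed.

Lemma flat_map_cons_perm {A : Type} (f : A -> mcar M) g t :
  Permutation (flat_map (fun b => f b :: g b) t) (map f t ++ flat_map g t).
Proof.
  induction t; simpl; auto.
  apply perm_skip. eapply Permutation_trans; [apply Permutation_app_head, IHt | perm_norm].
Qed.

Lemma nprod_comm s t : Permutation (nprod M s t) (nprod M t s).
Proof.
  induction s as [|a s IH]; simpl.
  - now rewrite nprod_nil_r.
  - unfold nprod at 2. simpl.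
    eapply Permutation_trans; [|apply Permutation_sym, flat_map_cons_perm].
    apply Permutation_app; auto.
    erewrite map_ext; [reflexivity | intros; apply mmul_comm].
Qed.

End Nprod.

Section BlueprintRing.
Variable B : Blueprint.
Notation R := (bR B).
Notation M := (bmon B).

Lemma bR_refl s : R s s.
Proof. destruct (bR_pre B) as (Hrefl & _); auto. Qed.

Lemma bR_sym s t : R s t -> R t s.
Proof. destruct (bR_pre B) as (_ & Hsym & _); auto. Qed.

Lemma bR_app s t u v : R s t -> R u v -> R (s ++ u) (t ++ v).
Proof. destruct (bR_pre B) as (_ & _ & _ & _ & Happ & _); auto. Qed.

Lemma bR_nprod s t u v : R s t -> R u v -> R (nprod M s u) (nprod M t v).
Proof. destruct (bR_pre B) as (_ & _ & _ & _ & _ & Hmul); auto. Qed.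

Lemma bz_eqP (x y : ZA (bcar B)) :
  bz_eq B x y <-> exists u v, R u v /\ Permutation (fst x ++ snd y ++ v) (u ++ snd x ++ fst y).
Proof.
  destruct x, y; unfold bz_eq, qeq, zeqE, zsub, zadd, zneg; simpl.
  split; intros (u & v & Huv & P); exists u, v; split; auto;
    (eapply Permutation_between; [exact P | perm_norm | perm_norm]).
Qed.

Lemma bz_eq_perm (x y : ZA (bcar B)) :
  Permutation (fst x ++ snd y) (snd x ++ fst y) -> bz_eq B x y.
Proof.
  intro P. apply bz_eqP. exists [], []. split; [apply bR_refl|].
  eapply Permutation_between; [exact P | perm_norm | perm_norm].
Qed.

Lemma bz_eq_refl x : bz_eq B x x.
Proof. apply bz_eq_perm. perm_norm. Qed.

Lemma bz_eq_sym x y : bz_eq B x y -> bz_eq B y x.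
Proof.
  rewrite !bz_eqP. intros (u & v & Huv & P). exists v, u. split; [now apply bR_sym|].
  apply Permutation_sym. eapply Permutation_between; [exact P | perm_norm | perm_norm].
Qed.

Lemma bz_eq_trans x y z : bz_eq B x y -> bz_eq B y z -> bz_eq B x z.
Proof.
  rewrite !bz_eqP. intros (u & v & Huv & P) (u' & v' & Huv' & P').
  exists (u ++ u'), (v ++ v'). split; [now apply bR_app|].
  apply (Permutation_app_inv_l (fst y ++ snd y)).
  eapply Permutation_between; [exact (Permutation_app P P') | perm_norm | perm_norm].
Qed.

Lemma bz_eq_add x x' y y' : bz_eq B x x' -> bz_eq B y y' -> bz_eq B (zadd x y) (zadd x' y').
Proof.
  rewrite !bz_eqP. intros (u & v & Huv & P) (u' & v' & Huv' & P').
  exists (u ++ u'), (v ++ v'). split; [now apply bR_app|].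
  destruct x, y, x', y'; simpl in *.
  eapply Permutation_between; [exact (Permutation_app P P') | perm_norm | perm_norm].
Qed.

Lemma bz_eq_neg x y : bz_eq B x y -> bz_eq B (zneg x) (zneg y).
Proof.
  rewrite !bz_eqP. intros (u & v & Huv & P). exists v, u. split; [now apply bR_sym|].
  destruct x, y; simpl in *.
  apply Permutation_sym. eapply Permutation_between; [exact P | perm_norm | perm_norm].
Qed.

Lemma nprod_app3_r s a b c :
  Permutation (nprod M s (a ++ b ++ c)) (nprod M s a ++ nprod M s b ++ nprod M s c).
Proof.
  eapply Permutation_trans; [apply nprod_app_r | apply Permutation_app_head, nprod_app_r].
Qed.

Lemma bz_eq_mul r x y : bz_eq B x y -> bz_eq B (zmul M r x) (zmul M r y).
Proof.
  rewrite !bz_eqP. intros (u & v & Huv & P).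
  destruct r as [r1 r2], x as [x1 x2], y as [y1 y2]; simpl in *.
  exists (nprod M r1 u ++ nprod M r2 v), (nprod M r1 v ++ nprod M r2 u). split.
  { apply bR_app; apply bR_nprod; auto using bR_refl, bR_sym. }
  assert (P1 := nprod_perm_r M r1 _ _ P).
  assert (P2 := nprod_perm_r M r2 _ _ P).
  rewrite !nprod_app3_r in P1, P2.
  apply Permutation_sym in P2.
  eapply Permutation_between; [exact (Permutation_app P1 P2) | perm_norm | perm_norm].
Qed.

End BlueprintRing.

Section DifferenceIdeal.
Variable B : Blueprint.
Notation M := (bmon B).

Lemma IZ_bz_eq r x y : bz_eq B x y -> IZ B r y -> IZ B r x.
Proof.
  intros Hxy (cs & ds & F & E). exists cs, ds. split; [exact F|].
  exact (bz_eq_trans B _ _ _ Hxy E).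
Qed.

Lemma IZ_z0 r : IZ B r z0.
Proof. exists [], []. split; [constructor | apply bz_eq_refl]. Qed.

Lemma IZ_add r x y : IZ B r x -> IZ B r y -> IZ B r (zadd x y).
Proof.
  intros (cs & ds & F & E) (cs' & ds' & F' & E'). exists (cs ++ cs'), (ds ++ ds').
  split; [now apply Forall2_app | exact (bz_eq_add B _ _ _ _ E E')].
Qed.

Definition IZrel (r : bcar B -> bcar B -> Prop) (s t : list (bcar B)) : Prop :=
  IZ B r (s, t).

Lemma IZrel_refl r s : IZrel r s s.
Proof. exists [], []. split; [constructor | apply bz_eq_perm; simpl; perm_norm]. Qed.

Lemma IZrel_trans r s t u : IZrel r s t -> IZrel r t u -> IZrel r s u.
Proof.
  intros Hst Htu. apply (IZ_bz_eq r _ (zadd (s, t) (t, u))); [|exact (IZ_add r _ _ Hst Htu)].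
  apply bz_eq_perm. simpl. perm_norm.
Qed.

Lemma IZrel_perm r s s' t t' :
  Permutation s s' -> Permutation t t' -> IZrel r s t -> IZrel r s' t'.
Proof.
  intros Ps Pt H. apply (IZ_bz_eq r _ (s, t)); [|exact H].
  apply bz_eq_perm. simpl.
  eapply Permutation_between; [exact (Permutation_app (Permutation_sym Ps) Pt) | perm_norm | perm_norm].
Qed.

Lemma IZrel_bR r s t : bR B s t -> IZrel r s t.
Proof.
  intro H. exists [], []. split; [constructor|].
  apply bz_eqP. exists s, t. split; [exact H | simpl; perm_norm].
Qed.

Lemma IZrel_Forall2 r s t : Forall2 r s t -> IZrel r s t.
Proof. intro H. exists s, t. split; [exact H | apply bz_eq_refl]. Qed.

Lemma IZrel_pair r a b : r a b -> IZrel r [a] [b].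
Proof. intro H. apply IZrel_Forall2. now repeat constructor. Qed.

Lemma IZrel_Forall2_sub (r r' : bcar B -> bcar B -> Prop) s t :
  (forall a b, r' a b -> IZrel r [a] [b]) -> Forall2 r' s t -> IZrel r s t.
Proof.
  intros Hr' F. induction F as [|a b s t Hab _ IH]; [apply IZrel_refl|].
  exact (IZ_add r ([a], [b]) (s, t) (Hr' a b Hab) IH).
Qed.

Lemma IZ_mono (r r' : bcar B -> bcar B -> Prop) x :
  (forall a b, r' a b -> IZrel r [a] [b]) -> IZ B r' x -> IZ B r x.
Proof.
  intros Hr' (cs & ds & F & E). apply (IZ_bz_eq r _ (cs, ds)); [exact E|].
  exact (IZrel_Forall2_sub r r' cs ds Hr' F).
Qed.

Section SymmetricRelation.
Variable r : bcar B -> bcar B -> Prop.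
Hypothesis r_sym : forall a b, r a b -> r b a.

Lemma Forall2_sym cs ds : Forall2 r cs ds -> Forall2 r ds cs.
Proof. intro F. apply Forall2_flip in F. eapply Forall2_impl; [|exact F]. auto. Qed.

Lemma IZ_neg x : IZ B r x -> IZ B r (zneg x).
Proof.
  intros (cs & ds & F & E). exists ds, cs.
  split; [exact (Forall2_sym _ _ F) | exact (bz_eq_neg B _ _ E)].
Qed.

Lemma IZrel_sym s t : IZrel r s t -> IZrel r t s.
Proof. exact (IZ_neg (s, t)). Qed.

Lemma IZrel_linext (r' : bcar B -> bcar B -> Prop) s t :
  (forall a b, r' a b -> IZrel r [a] [b]) -> linext r' s t -> IZrel r s t.
Proof.
  intros Hr' H. induction H as [s t [F | P] | | |].
  - exact (IZrel_Forall2_sub r r' s t Hr' F).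
  - exact (IZrel_perm r s s s t (Permutation_refl s) P (IZrel_refl r s)).
  - apply IZrel_refl.
  - now apply IZrel_sym.
  - eapply IZrel_trans; eauto.
Qed.

Hypothesis r_mul : forall a c d, r c d -> r (mmul M a c) (mmul M a d).

Lemma Forall2_nprod s cs ds : Forall2 r cs ds -> Forall2 r (nprod M s cs) (nprod M s ds).
Proof.
  intro F. induction s as [|a s IH]; simpl; [constructor|].
  apply Forall2_app; [|exact IH].
  clear IH. induction F; simpl; constructor; auto.
Qed.

Lemma IZ_mul y x : IZ B r x -> IZ B r (zmul M y x).
Proof.
  intros (cs & ds & F & E). apply (IZ_bz_eq r _ (zmul M y (cs, ds))); [exact (bz_eq_mul B y _ _ E)|].
  destruct y as [y1 y2]. simpl.
  exists (nprod M y1 cs ++ nprod M y2 ds), (nprod M y1 ds ++ nprod M y2 cs).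
  split; [|apply bz_eq_refl].
  apply Forall2_app; apply Forall2_nprod; [exact F | exact (Forall2_sym _ _ F)].
Qed.

Lemma IZ_ring_ideal : ring_ideal M (bz_eq B) (IZ B r).
Proof.
  split; [|split; [|split; [|split]]].
  - intros x y Hxy. apply IZ_bz_eq. now apply bz_eq_sym.
  - apply IZ_z0.
  - apply IZ_add.
  - exact IZ_neg.
  - exact IZ_mul.
Qed.

(* [s u ≡ s v] and [v s ≡ v t]; commutativity of [nprod] turns the latter into [s v ≡ t v]. *)
Lemma IZrel_pre_addition : pre_addition M (IZrel r).
Proof.
  split; [|split; [|split; [|split; [|split]]]].
  - apply IZrel_refl.
  - exact IZrel_sym.
  - apply IZrel_trans.
  - intros s s' t t' Ps Pt. exact (IZrel_perm r s s' t t' Ps Pt).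
  - intros s t u v. exact (IZ_add r (s, t) (u, v)).
  - intros s t u v Hst Huv. apply (IZrel_trans r _ (nprod M s v)).
    + assert (K := IZ_mul (s, []) _ Huv). unfold zmul in K; simpl in K. rewrite !app_nil_r in K. exact K.
    + assert (K := IZ_mul (v, []) _ Hst). unfold zmul in K; simpl in K. rewrite !app_nil_r in K.
      exact (IZrel_perm r _ _ _ _ (nprod_comm M v s) (nprod_comm M v t) K).
Qed.

End SymmetricRelation.
End DifferenceIdeal.

Section Congruence.
Variable B : Blueprint.
Variable sim : bcar B -> bcar B -> Prop.
Hypothesis sim_congr : is_congruence B sim.

Lemma congruence_sym a b : sim a b -> sim b a.
Proof. destruct sim_congr as ((_ & Hsym & _) & _). auto. Qed.

(* By (C1), [a c ~_N a d]; by (C2) this one-term relation already holds in [~]. *)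
Lemma congruence_mul a c d : sim c d -> sim (mmul (bmon B) a c) (mmul (bmon B) a d).
Proof.
  destruct sim_congr as (_ & (Lrefl & _ & _ & _ & _ & Lmul) & C2). intro Hcd.
  apply C2, rst_step. right.
  exact (Lmul [a] [a] [c] [d] (Lrefl [a]) (rst_step _ _ _ _ (or_introl (Forall2_cons _ _ Hcd (Forall2_nil _))))).
Qed.

Lemma quotR_IZrel s t : quotR B sim s t -> IZrel B sim s t.
Proof.
  intro H. apply H.
  - exact (IZrel_pre_addition B sim congruence_sym congruence_mul).
  - apply IZrel_bR.
  - intros u v. exact (IZrel_linext B sim congruence_sym sim u v (IZrel_pair B sim)).
Qed.

Lemma quot_bz_eq_IZ x y : quot_bz_eq B sim x y -> IZ B sim (zsub x y).
Proof.
  destruct x as [x1 x2], y as [y1 y2].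
  intros (u & v & Huv & HL). unfold zeqE, zsub, zadd, zneg in HL; simpl in HL.
  apply (IZ_bz_eq B sim _ (zadd (u, v) ((x1 ++ y2) ++ v, u ++ x2 ++ y1))).
  - apply bz_eq_perm. simpl. perm_norm.
  - apply (IZ_add B sim (u, v)); [exact (quotR_IZrel u v Huv)|].
    exact (IZrel_linext B sim congruence_sym sim _ _ (IZrel_pair B sim) HL).
Qed.

Lemma IZ_quot_bz_eq x y : IZ B sim (zsub x y) -> quot_bz_eq B sim x y.
Proof.
  destruct sim_congr as (_ & (Lrefl & _ & _ & Lperm & Lapp & _) & _).
  destruct x as [x1 x2], y as [y1 y2].
  intros (cs & ds & F & E). apply bz_eqP in E. destruct E as (u & v & Huv & P).
  simpl in P. exists (u ++ ds), (v ++ ds). split.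
  - intros Q (_ & _ & _ & _ & Qapp & _) QR QL. apply Qapp; auto.
  - unfold zeqE, zsub, zadd, zneg; simpl.
    apply (Lperm ((u ++ x2 ++ y1) ++ cs) _ ((u ++ x2 ++ y1) ++ ds) _).
    + apply Permutation_sym. eapply Permutation_between; [exact P | perm_norm | perm_norm].
    + perm_norm.
    + apply Lapp; [apply Lrefl | apply rst_step; left; exact F].
Qed.

End Congruence.

Section IdealCongruence.
Variable B : Blueprint.
Variable I : bcar B -> Prop.

Definition both_in (c d : bcar B) : Prop := I c /\ I d.

Lemma both_in_simI a b : both_in a b -> simI B I a b.
Proof.
  intro H. apply (ich_one B I _ [a] [b]); [apply bR_refl | | apply bR_refl].
  apply rst_step. left. constructor; [now right | constructor].
Qed.

Lemma Ichain_IZrel s t : Ichain B I s t -> IZrel B both_in s t.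
Proof.
  assert (Hlin : forall c d, linext (simI0 B I) c d -> IZrel B both_in c d).
  { intros c d. apply IZrel_linext; [unfold both_in; tauto|].
    intros a b [<- | Hab]; [apply IZrel_refl | now apply IZrel_pair]. }
  induction 1 as [s c d t Hsc Hcd Hdt | s c d t Hsc Hcd _ IH].
  - apply (IZrel_trans B _ _ c); [now apply IZrel_bR|].
    apply (IZrel_trans B _ _ d); [now apply Hlin | now apply IZrel_bR].
  - apply (IZrel_trans B _ _ c); [now apply IZrel_bR|].
    apply (IZrel_trans B _ _ d); [now apply Hlin | exact IH].
Qed.

End IdealCongruence.

Theorem mainTheorem12 (B : Blueprint) (sim : bcar B -> bcar B -> Prop) :
  is_congruence B sim ->
  ring_ideal (bmon B) (bz_eq B) (IZ B sim) /\
  (forall x y : ZA (bcar B), quot_bz_eq B sim x y <-> IZ B sim (zsub x y)) /\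
  (forall I : bcar B -> Prop,
     is_bp_ideal B I ->
     (forall a b, sim a b <-> simI B I a b) ->
     forall x : ZA (bcar B),
       IZ B sim x <->
       exists cs ds : list (bcar B),
         Forall2 (fun c d => I c /\ I d) cs ds /\ bz_eq B x (cs, ds)).
Proof.
  intro Hsim. split; [|split].
  - exact (IZ_ring_ideal B sim (congruence_sym B sim Hsim) (congruence_mul B sim Hsim)).
  - intros x y. split; [apply quot_bz_eq_IZ | apply IZ_quot_bz_eq]; exact Hsim.
  - intros I _ HsimI x. split.
    + apply (IZ_mono B (both_in B I) sim).
      intros a b Hab. exact (Ichain_IZrel B I _ _ (proj1 (HsimI a b) Hab)).
    + apply (IZ_mono B sim (both_in B I)).
      intros a b Hab. exact (IZrel_pair B sim a b (proj2 (HsimI a b) (both_in_simI B I a b Hab))).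
Qed.
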